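(* Let $A,q,\mu$ be as in the context and write $k=k_0(A,q,\mu)$. (i) Let $\phi,\tilde\phi\in\mathcal{C}^2(\mathbb{R}^N)$ be positive periodic functions satisfying $-\nabla\cdot(A\nabla\phi)-q\cdot\nabla\phi-\mu\phi=k\phi$ and $-\nabla\cdot(A\nabla\tilde\phi)+q\cdot\nabla\tilde\phi-(\mu-\nabla\cdot q)\tilde\phi=k\tilde\phi$, with $\int_C\phi\tilde\phi=1$. Then $\alpha=\sqrt{\phi\tilde\phi}$ and $\beta=\frac12\ln(\phi/\tilde\phi)$ belong to $\mathcal{C}^2(\mathbb{R}^N)$ and satisfy \[-\nabla\cdot (A\nabla\alpha) - \Big(\mu-\frac{\nabla\cdot q}{2}+\nabla\beta A\nabla\beta+q\cdot \nabla\beta\Big)\alpha=k\alpha,\qquad -\nabla\cdot \Big( \alpha^2 \big(A\nabla\beta+\frac{q}{2}\big)\Big)=0,\] with $\alpha>0$ periodic and $\beta$ periodic. (ii) Conversely, if $(\alpha,\beta)\in\mathcal{C}^2(\mathbb{R}^N)\times\mathcal{C}^2(\mathbb{R}^N)$ satisfy the two equations in (i) with $\alpha>0$ periodic and $\beta$ periodic, then $\phi=\alpha e^{\beta}$ and $\tilde\phi=\alpha e^{-\beta}$ are positive periodic functions satisfying the two eigenvalue equations in (i).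
   Context: Let $(\epsilon_i)$ be an orthonormal basis of $\mathbb{R}^N$ and $L_1,\dots,L_N>0$; a function is periodic if it is invariant under $x\mapsto x+L_i\epsilon_i$ for every $i$; $C=\prod_{i=1}^N(0,L_i)$ is the periodicity cell. Let $A$ be a periodic, symmetric matrix field of class $\mathcal{C}^1$, uniformly elliptic ($\gamma|\xi|^2\le\xi A(x)\xi\le\Gamma|\xi|^2$ for some $0<\gamma\le\Gamma$). Let $q$ be a periodic $\mathcal{C}^1$ vector field and $\mu$ a continuous periodic function. $k_0(A,q,\mu)$ is the periodic principal eigenvalue of $\phi\mapsto-\nabla\cdot(A\nabla\phi)-q\cdot\nabla\phi-\mu\phi$, i.e. the unique real $k$ for which there exists a periodic $\phi\in\mathcal{C}^2(\mathbb{R}^N)$, $\phi>0$, with $-\nabla\cdot(A\nabla\phi)-q\cdot\nabla\phi-\mu\phi=k\phi$. *)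

From HB Require Import structures.
From mathcomp Require Import all_boot all_order all_algebra.
From mathcomp Require Import all_classical all_reals all_analysis.
Set Implicit Arguments. Unset Strict Implicit. Unset Printing Implicit Defensive.
Import Order.TTheory GRing.Theory Num.Theory.
Import numFieldNormedType.Exports.
Local Open Scope classical_set_scope.
Local Open Scope ring_scope.

Section Defs.
Variables (R : realType) (N : nat).
Notation pt := 'rV[R]_N.

Definition ebase (i : 'I_N) : pt := delta_mx 0 i.
Definition partial (i : 'I_N) (f : pt -> R) (x : pt) : R := 'D_(ebase i) f x.

Definition C1 (f : pt -> R) : Prop :=
  continuous f /\
  forall i : 'I_N, (forall x, derivable f x (ebase i)) /\ continuous (partial i f).
Definition C2 (f : pt -> R) : Prop := C1 f /\ forall i : 'I_N, C1 (partial i f).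

Definition grad (f : pt -> R) (x : pt) : pt := \row_i partial i f x.
Definition div (F : pt -> pt) (x : pt) : R :=
  \sum_(i < N) partial i (fun y => F y 0 i) x.
Definition dotv (u v : pt) : R := \sum_(i < N) u 0 i * v 0 i.
Definition matv (M : 'M[R]_N) (u : pt) : pt := (M *m u^T)^T.
Definition Agrad (A : pt -> 'M[R]_N) (f : pt -> R) (x : pt) : pt :=
  matv (A x) (grad f x).

Definition cell_periodic {T : Type} (eps : 'I_N -> pt) (L : 'I_N -> R) (f : pt -> T) : Prop :=
  forall (x : pt) (i : 'I_N), f (x + L i *: eps i) = f x.

Definition orthonormal_fam (eps : 'I_N -> pt) : Prop :=
  forall i j : 'I_N, dotv (eps i) (eps j) = (i == j)%:R.

Definition Lop (A : pt -> 'M[R]_N) (q : pt -> pt) (mu : pt -> R) (phi : pt -> R)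
  (x : pt) : R :=
  - div (Agrad A phi) x - dotv (q x) (grad phi x) - mu x * phi x.

(* periodic principal eigenvalue: the (unique) k admitting a positive cell_periodic
   C^2 eigenfunction *)
Definition is_periodic_principal_eigenvalue (eps : 'I_N -> pt) (L : 'I_N -> R)
  (A : pt -> 'M[R]_N) (q : pt -> pt) (mu : pt -> R) (k : R) : Prop :=
  exists phi : pt -> R, [/\ C2 phi, cell_periodic eps L phi, (forall x, 0 < phi x) &
    forall x, Lop A q mu phi x = k * phi x].

Definition k0 (eps : 'I_N -> pt) (L : 'I_N -> R)
  (A : pt -> 'M[R]_N) (q : pt -> pt) (mu : pt -> R) : R :=
  get [set k | is_periodic_principal_eigenvalue eps L A q mu k].

(* Integral over the periodicity cell C = { sum_i t_i eps_i : t_i in (0, L_i) },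
   computed as an iterated Lebesgue integral in the coordinates t_i
   (orthonormal_fam change of variables has Jacobian 1). *)
Definition Lnat (L : 'I_N -> R) (n : nat) : R :=
  if insub n is Some i then L i else 0.

Fixpoint box_int (n : nat) (Ln : nat -> R) (g : (nat -> R) -> R) : R :=
  match n with
  | 0 => g (fun _ => 0)
  | n'.+1 => Rintegral (@lebesgue_measure R) `]0, Ln n'[
       (fun t => box_int n' Ln (fun s => g (fun j => if j == n' then t else s j)))
  end.

Definition cell_integral (eps : 'I_N -> pt) (L : 'I_N -> R) (f : pt -> R) : R :=
  box_int N (Lnat L) (fun s => f (\sum_(i < N) s i *: eps i)).

End Defs.

From HB Require Import structures.
From mathcomp Require Import all_boot all_order all_algebra.
From mathcomp Require Import all_classical all_reals all_analysis.
From mathcomp Require Import ring lra.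
Import Order.TTheory GRing.Theory Num.Theory.
Import numFieldNormedType.Exports.
Local Open Scope ring_scope.

(* Write phi = alpha e^beta and phit = alpha e^(-beta).  Expanding with the product and
   chain rules, and using the symmetry of A to identify grad alpha . A grad beta with
   grad beta . A grad alpha, gives for c = 1 and c = -1
     alpha L_c(alpha e^(c beta)) = e^(c beta) (alpha G - c div (alpha^2 (A grad beta + q/2))),
   where L_1 is the operator of the statement, L_(-1) its formal adjoint and G the
   left-hand side of the equation for alpha.  Hence both eigenvalue equations hold iff
   alpha (G - k alpha) equals both div(...) and - div(...), i.e. iff the divergence
   vanishes and G = k alpha.  Every positive pair (phi, phit) has this form, with
   alpha = sqrt(phi phit) and beta = ln(phi/phit)/2.  The argument works for any real k;
   ellipticity, normalisation and periodicity of the coefficients are never used. *)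
Section PartialDerivatives.
Context {R : realType} {N : nat}.
Notation pt := 'rV[R]_N.
Implicit Types (i j : 'I_N) (x : pt) (f g : pt -> R).

Lemma derive_along_line f x (v : pt) :
  'D_v f x = 'D_1 (fun h : R => f (h *: v + x)) 0.
Proof.
rewrite /derive; congr lim.
suff -> : (fun h : R => h^-1 *: ((f \o shift x) (h *: v) - f x)) =
  (fun h : R => h^-1 *: (((fun h0 : R => f (h0 *: v + x)) \o shift 0) (h *: 1)
                          - f (0 *: v + x))) by [].
by apply: funext => h /=; rewrite scale0r add0r addr0 [_%:A]mulr1.
Qed.

Lemma is_derive_comp {g : R -> R} {dg : R} {f x} {v : pt} :
  is_derive (f x) 1 g dg -> derivable f x v ->
  is_derive x v (fun y => g (f y)) (dg * 'D_v f x).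
Proof.
move=> gdg df; set F := fun h : R => f (h *: v + x).
have dF : is_derive (0 : R) (1 : R) F ('D_v f x).
  by rewrite derive_along_line; apply/derivableP/(derivable1P _ _ _).1.
have gdgF : is_derive (F 0) 1 g dg by rewrite /F scale0r add0r.
have [gF_derivable gF_derive] := is_derive1_comp gdgF dF.
apply: DeriveDef; first exact/derivable1P.
by rewrite derive_along_line gF_derive.
Qed.

Definition pderivable f := forall i x, derivable f x (ebase R i).

Lemma partialD {f g i x} : derivable f x (ebase R i) -> derivable g x (ebase R i) ->
  partial i (fun y => f y + g y) x = partial i f x + partial i g x.
Proof. exact: deriveD. Qed.

Lemma partialM {f g i x} : derivable f x (ebase R i) -> derivable g x (ebase R i) ->
  partial i (fun y => f y * g y) x = f x * partial i g x + g x * partial i f x.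
Proof. exact: deriveM. Qed.

Lemma partial_comp {g : R -> R} {dg : R} {f i x} :
  is_derive (f x) 1 g dg -> derivable f x (ebase R i) ->
  partial i (fun y => g (f y)) x = dg * partial i f x.
Proof. by move=> gdg /(is_derive_comp gdg) []. Qed.

Lemma C1_continuous {f} : C1 f -> continuous f.
Proof. by case. Qed.

Lemma C1_pderivable {f} : C1 f -> pderivable f.
Proof. by move=> [_ Df] i; case: (Df i). Qed.

Lemma C1_partial_continuous {f} : C1 f -> forall i, continuous (partial i f).
Proof. by move=> [_ Df] i; case: (Df i). Qed.

Lemma C1_intro f (Df : 'I_N -> pt -> R) :
  continuous f -> (forall i x, is_derive x (ebase R i) f (Df i x)) ->
  (forall i, continuous (Df i)) -> C1 f.
Proof.
move=> cf fDf cDf; split=> // i.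
have -> : partial i f = Df i by apply: funext => x; exact: derive_val.
by split=> // x; exact: ex_derive.
Qed.

Lemma C1_cst (c : R) : C1 (fun _ : pt => c).
Proof.
by apply: (@C1_intro _ (fun _ _ => 0)) => [x|i x]; exact: cst_continuous.
Qed.

Lemma C1D {f g} : C1 f -> C1 g -> C1 (fun y => f y + g y).
Proof.
move=> Cf Cg; have [Df Dg] := (C1_pderivable Cf, C1_pderivable Cg).
have [cf cg] := (C1_continuous Cf, C1_continuous Cg).
apply: (@C1_intro _ (fun i x => partial i f x + partial i g x)) => [x|i x|i x].
- exact: continuousD (cf x) (cg x).
- by apply: is_deriveD; exact: derivableP.
- by apply: continuousD; exact: C1_partial_continuous.
Qed.

Lemma C1M {f g} : C1 f -> C1 g -> C1 (fun y => f y * g y).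
Proof.
move=> Cf Cg; have [Df Dg] := (C1_pderivable Cf, C1_pderivable Cg).
have [cf cg] := (C1_continuous Cf, C1_continuous Cg).
apply: (@C1_intro _ (fun i x => f x * partial i g x + g x * partial i f x)).
- by move=> x; exact: continuousM (cf x) (cg x).
- by move=> i x; apply: is_deriveM; exact: derivableP.
- move=> i x; have [pcf pcg] := (C1_partial_continuous Cf i, C1_partial_continuous Cg i).
  exact: continuousD (continuousM (cf x) (pcg x)) (continuousM (cg x) (pcf x)).
Qed.

Lemma C1_comp {g g' : R -> R} {f} :
  (forall x, is_derive (f x) 1 g (g' (f x))) -> continuous (fun x => g' (f x)) ->
  C1 f -> C1 (fun x => g (f x)).
Proof.
move=> gg' cg' Cf; have [Df cf] := (C1_pderivable Cf, C1_continuous Cf).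
apply: (@C1_intro _ (fun i x => g' (f x) * partial i f x)).
- move=> x; apply: continuous_comp; first exact: cf.
  by apply/differentiable_continuous/derivable1_diffP; case: (gg' x).
- by move=> i x; exact: is_derive_comp.
- by move=> i x; apply: continuousM; [exact: cg' | exact: C1_partial_continuous].
Qed.

Lemma C2_C1 {f} : C2 f -> C1 f.
Proof. by case. Qed.

Lemma C2_partial {f} : C2 f -> forall i, C1 (partial i f).
Proof. by case. Qed.

Lemma C2_intro f (Df : 'I_N -> pt -> R) :
  C1 f -> (forall i x, is_derive x (ebase R i) f (Df i x)) ->
  (forall i, C1 (Df i)) -> C2 f.
Proof.
move=> Cf fDf CDf; split=> // i.
by have -> : partial i f = Df i by apply: funext => x; exact: derive_val.
Qed.

Lemma C2D {f g} : C2 f -> C2 g -> C2 (fun y => f y + g y).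
Proof.
move=> Cf Cg; have [Df Dg] := (C1_pderivable (C2_C1 Cf), C1_pderivable (C2_C1 Cg)).
apply: (@C2_intro _ (fun i x => partial i f x + partial i g x)).
- by apply: C1D; exact: C2_C1.
- by move=> i x; apply: is_deriveD; exact: derivableP.
- by move=> i; apply: C1D; exact: C2_partial.
Qed.

Lemma C2M {f g} : C2 f -> C2 g -> C2 (fun y => f y * g y).
Proof.
move=> Cf Cg; have [Df Dg] := (C1_pderivable (C2_C1 Cf), C1_pderivable (C2_C1 Cg)).
apply: (@C2_intro _ (fun i x => f x * partial i g x + g x * partial i f x)).
- by apply: C1M; exact: C2_C1.
- by move=> i x; apply: is_deriveM; exact: derivableP.
- move=> i; have [C1f C1g] := (C2_C1 Cf, C2_C1 Cg).
  exact: C1D (C1M C1f (C2_partial Cg i)) (C1M C1g (C2_partial Cf i)).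
Qed.

Lemma C2_comp {g g' : R -> R} {f} :
  (forall x, is_derive (f x) 1 g (g' (f x))) -> C1 (fun x => g' (f x)) ->
  C2 f -> C2 (fun x => g (f x)).
Proof.
move=> gg' Cg' Cf; have Df := C1_pderivable (C2_C1 Cf).
apply: (@C2_intro _ (fun i x => g' (f x) * partial i f x)).
- exact: C1_comp gg' (C1_continuous Cg') (C2_C1 Cf).
- by move=> i x; exact: is_derive_comp.
- by move=> i; exact: C1M Cg' (C2_partial Cf i).
Qed.

Lemma C2_cst (c : R) : C2 (fun _ : pt => c).
Proof. by apply: (@C2_intro _ (fun _ _ => 0)) => *; exact: C1_cst. Qed.

Lemma C2_scale (c : R) {f} : C2 f -> C2 (fun x => c * f x).
Proof. exact: C2M (C2_cst c). Qed.

Lemma C2N {f} : C2 f -> C2 (fun x => - f x).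
Proof.
move=> /(C2_scale (-1)); congr C2; apply: funext => x; exact: mulN1r.
Qed.

Lemma C2_expR {f} : C2 f -> C2 (fun x => expR (f x)).
Proof.
move=> Cf; apply: (@C2_comp expR expR) => //.
apply: (@C1_comp expR expR _ _ _ (C2_C1 Cf)) => // x.
exact: continuous_comp (C1_continuous (C2_C1 Cf) x) (@continuous_expR R _).
Qed.

Lemma C2_ln {f} : (forall x, 0 < f x) -> C2 f -> C2 (fun x => ln (f x)).
Proof.
move=> fgt0 Cf; apply: (@C2_comp (@ln R) (@GRing.inv R)) => [x||//].
  exact: is_derive1_ln.
apply: (@C1_comp _ (fun y => - y ^- 2) _ _ _ (C2_C1 Cf)) => x.
  have := @is_deriveV R id (f x) 1 1 (lt0r_neq0 (fgt0 x)) (is_derive_id _ _).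
  by rewrite [_%:A]mulr1.
have cf := C1_continuous (C2_C1 Cf).
have fx2_neq0 : f x * f x != 0 by rewrite mulf_neq0 ?lt0r_neq0.
exact: continuousN (continuousV (s := f \* f) fx2_neq0 (continuousM (cf x) (cf x))).
Qed.

End PartialDerivatives.

Section VectorCalculus.
Context {R : realType} {N : nat}.
Notation pt := 'rV[R]_N.
Implicit Types (i j : 'I_N) (x : pt) (f g : pt -> R) (V W : pt -> pt) (M : 'M[R]_N).

Definition pderivable_field V := forall i, pderivable (fun y => V y 0 i).

Lemma gradE f x i : grad f x 0 i = partial i f x.
Proof. by rewrite mxE. Qed.

Lemma grad_mul f g x : pderivable f -> pderivable g ->
  grad (fun y => f y * g y) x = f x *: grad g x + g x *: grad f x.
Proof. by move=> Df Dg; apply/rowP => i; rewrite !mxE partialM. Qed.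

Lemma grad_scale (c : R) f x : pderivable f ->
  grad (fun y => c * f y) x = c *: grad f x.
Proof. by move=> Df; apply/rowP => i; rewrite !mxE [LHS]deriveMl. Qed.

Lemma grad_comp {g : R -> R} {dg : R} {f x} : is_derive (f x) 1 g dg -> pderivable f ->
  grad (fun y => g (f y)) x = dg *: grad f x.
Proof. by move=> gdg Df; apply/rowP => i; rewrite !mxE (partial_comp gdg). Qed.

Lemma matvE M (u : pt) i : matv M u 0 i = \sum_(j < N) M i j * u 0 j.
Proof. by rewrite !mxE; apply: eq_bigr => j _; rewrite mxE. Qed.

Lemma matvD M (u v : pt) : matv M (u + v) = matv M u + matv M v.
Proof. by rewrite /matv linearD /= mulmxDr linearD. Qed.

Lemma matvZ M (a : R) (u : pt) : matv M (a *: u) = a *: matv M u.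
Proof. by rewrite /matv linearZ /= -scalemxAr linearZ. Qed.

Lemma dotvC (u v : pt) : dotv u v = dotv v u.
Proof. by apply: eq_bigr => j _; rewrite mulrC. Qed.

Lemma dotvDr (u v w : pt) : dotv u (v + w) = dotv u v + dotv u w.
Proof. by rewrite /dotv -big_split; apply: eq_bigr => j _; rewrite mxE mulrDr. Qed.

Lemma dotvZr (a : R) (u v : pt) : dotv u (a *: v) = a * dotv u v.
Proof. by rewrite /dotv mulr_sumr; apply: eq_bigr => j _; rewrite mxE mulrCA. Qed.

Lemma dotvDl (u v w : pt) : dotv (u + v) w = dotv u w + dotv v w.
Proof. by rewrite dotvC dotvDr !(dotvC w). Qed.

Lemma dotvZl (a : R) (u v : pt) : dotv (a *: u) v = a * dotv u v.
Proof. by rewrite dotvC dotvZr dotvC. Qed.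

Lemma dotv_matv_sym M (u v : pt) : M^T = M -> dotv u (matv M v) = dotv v (matv M u).
Proof.
move=> MT; rewrite /dotv.
under eq_bigr do rewrite matvE mulr_sumr.
under [RHS]eq_bigr do rewrite matvE mulr_sumr.
rewrite exchange_big; apply: eq_bigr => j _; apply: eq_bigr => i _.
have -> : M j i = M i j by rewrite -[in LHS]MT mxE.
ring.
Qed.

Lemma pderivable_fieldD V W : pderivable_field V -> pderivable_field W ->
  pderivable_field (fun y => V y + W y).
Proof.
move=> DV DW i j x; rewrite (_ : (fun y => _) = (fun y => V y 0 i + W y 0 i)).
  exact: derivableD (DV i j x) (DW i j x).
by apply: funext => y; rewrite mxE.
Qed.

Lemma pderivable_fieldZ f V : pderivable f -> pderivable_field V ->
  pderivable_field (fun y => f y *: V y).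
Proof.
move=> Df DV i j x; rewrite (_ : (fun y => _) = (fun y => f y * V y 0 i)).
  exact: derivableM (Df j x) (DV i j x).
by apply: funext => y; rewrite mxE.
Qed.

Lemma divD V W x : pderivable_field V -> pderivable_field W ->
  div (fun y => V y + W y) x = div V x + div W x.
Proof.
move=> DV DW; rewrite /div -big_split; apply: eq_bigr => i _ /=.
rewrite (_ : (fun y => _) = (fun y => V y 0 i + W y 0 i)).
  exact: partialD (DV i i x) (DW i i x).
by apply: funext => y; rewrite mxE.
Qed.

Lemma div_fun_scale f V x : pderivable f -> pderivable_field V ->
  div (fun y => f y *: V y) x = f x * div V x + dotv (grad f x) (V x).
Proof.
move=> Df DV; rewrite /div /dotv mulr_sumr -big_split; apply: eq_bigr => i _ /=.
rewrite (_ : (fun y => _) = (fun y => f y * V y 0 i)); last first.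
  by apply: funext => y; rewrite mxE.
by rewrite (partialM (Df i x) (DV i i x)) gradE [V x 0 i * _]mulrC.
Qed.

Lemma div_scale (c : R) V x : pderivable_field V ->
  div (fun y => c *: V y) x = c * div V x.
Proof.
move=> DV; rewrite /div mulr_sumr; apply: eq_bigr => i _ /=.
rewrite (_ : (fun y => _) = (fun y => c * V y 0 i)); first by apply: deriveMl; exact: DV.
by apply: funext => y; rewrite mxE.
Qed.

Lemma pderivable_Agrad {A : pt -> 'M[R]_N} {f} :
  (forall i j, pderivable (fun y => A y i j)) -> (forall j, pderivable (partial j f)) ->
  pderivable_field (Agrad A f).
Proof.
move=> DA Df i j x.
have -> : (fun y => Agrad A f y 0 i) = \sum_(k < N) (fun y => A y i k * partial k f y).
  by apply: funext => y; rewrite fct_sumE matvE; apply: eq_bigr => k _; rewrite mxE.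
by apply: derivable_sum => k; exact: derivableM (DA i k j x) (Df k j x).
Qed.

End VectorCalculus.

Lemma sqrtM_expR_ln {R : realType} (a b : R) : 0 < a -> 0 < b ->
  Num.sqrt (a * b) = expR (2^-1 * (ln a + ln b)).
Proof.
move=> a_gt0 b_gt0; have ab_gt0 := mulr_gt0 a_gt0 b_gt0.
by rewrite -powR12_sqrt ?ltW // /powR gt_eqF // lnM.
Qed.

Lemma sqrtM_expR_half_ln_div {R : realType} (a b : R) : 0 < a -> 0 < b ->
  Num.sqrt (a * b) * expR (2^-1 * ln (a / b)) = a.
Proof.
move=> a_gt0 b_gt0; rewrite sqrtM_expR_ln // -expRD ln_div //.
by rewrite (_ : _ + _ = ln a) ?lnK //; field.
Qed.

Lemma sqrtM_expR_Nhalf_ln_div {R : realType} (a b : R) : 0 < a -> 0 < b ->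
  Num.sqrt (a * b) * expR (- (2^-1 * ln (a / b))) = b.
Proof.
move=> a_gt0 b_gt0.
have -> : - (2^-1 * ln (a / b)) = 2^-1 * ln (b / a) by rewrite !ln_div ?posrE //; ring.
by rewrite [a * b]mulrC sqrtM_expR_half_ln_div.
Qed.

Section GaugeTransform.
Context {R : realType} {N : nat}.
Notation pt := 'rV[R]_N.
Variables (A : pt -> 'M[R]_N) (q : pt -> pt) (mu : pt -> R).
Hypothesis A_sym : forall x, (A x)^T = A x.
Hypothesis A_pderivable : forall i j, pderivable (fun x => A x i j).
Hypothesis q_pderivable : pderivable_field q.
Implicit Types (x : pt) (phi alpha beta : pt -> R).

(* [signed_op 1] is [Lop A q mu] and [signed_op (-1)] is its formal adjoint. *)
Definition signed_op (c : R) phi x : R :=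
  - div (Agrad A phi) x - c * dotv (q x) (grad phi x)
  - (mu x - (1 - c) / 2 * div q x) * phi x.

Definition gauge_op alpha beta x : R :=
  - div (Agrad A alpha) x
  - (mu x - div q x / 2 + dotv (grad beta x) (Agrad A beta x)
     + dotv (q x) (grad beta x)) * alpha x.

Definition flux alpha beta x : pt := alpha x ^+ 2 *: (Agrad A beta x + 2^-1 *: q x).

Lemma dotv_Agrad_sym f g x :
  dotv (grad f x) (Agrad A g x) = dotv (grad g x) (Agrad A f x).
Proof. exact: dotv_matv_sym. Qed.

Lemma signed_op1 phi x : signed_op 1 phi x = Lop A q mu phi x.
Proof. by rewrite /signed_op /Lop; ring. Qed.

Lemma signed_opN1 phi x : signed_op (-1) phi x =
  - div (Agrad A phi) x + dotv (q x) (grad phi x) - (mu x - div q x) * phi x.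
Proof. by rewrite /signed_op; field. Qed.

Section Gauge.
Variables alpha beta : pt -> R.
Hypotheses (alpha_C2 : C2 alpha) (beta_C2 : C2 beta).

Let alpha_pderivable := C1_pderivable (C2_C1 alpha_C2).
Let beta_pderivable := C1_pderivable (C2_C1 beta_C2).
Let Agrad_alpha_pderivable :=
  pderivable_Agrad A_pderivable (fun j => C1_pderivable (C2_partial alpha_C2 j)).
Let Agrad_beta_pderivable :=
  pderivable_Agrad A_pderivable (fun j => C1_pderivable (C2_partial beta_C2 j)).

Lemma grad_expR_scale (c : R) x :
  grad (fun y => expR (c * beta y)) x = (c * expR (c * beta x)) *: grad beta x.
Proof.
have Dcb := C1_pderivable (C2_C1 (C2_scale c beta_C2)).
by rewrite (grad_comp (is_derive_expR _) Dcb) grad_scale // scalerA mulrC.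
Qed.

Lemma grad_gauge (c : R) x :
  grad (fun y => alpha y * expR (c * beta y)) x =
  expR (c * beta x) *: (grad alpha x + (c * alpha x) *: grad beta x).
Proof.
have DE := C1_pderivable (C2_C1 (C2_expR (C2_scale c beta_C2))).
rewrite grad_mul // grad_expR_scale.
by apply/rowP => i; rewrite !mxE; ring.
Qed.

Lemma div_Agrad_gauge (c : R) x :
  div (Agrad A (fun y => alpha y * expR (c * beta y))) x =
  expR (c * beta x) * (div (Agrad A alpha) x
    + 2 * c * dotv (grad beta x) (Agrad A alpha x) + c * alpha x * div (Agrad A beta) x
    + c ^+ 2 * alpha x * dotv (grad beta x) (Agrad A beta x)).
Proof.
set E := fun y => expR (c * beta y).
have DE : pderivable E := C1_pderivable (C2_C1 (C2_expR (C2_scale c beta_C2))).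
have DcaE : pderivable (fun y => c * alpha y * E y).
  exact: C1_pderivable (C2_C1 (C2M (C2_scale c alpha_C2) (C2_expR (C2_scale c beta_C2)))).
have -> : Agrad A (fun y => alpha y * E y) =
    fun y => E y *: Agrad A alpha y + (c * alpha y * E y) *: Agrad A beta y.
  apply: funext => y; rewrite /Agrad grad_gauge matvZ matvD matvZ.
  by rewrite scalerDr scalerA [E y * _]mulrC.
rewrite divD; last 2 first.
- exact: pderivable_fieldZ.
- exact: pderivable_fieldZ.
have DcA : pderivable (fun y => c * alpha y) := C1_pderivable (C2_C1 (C2_scale c alpha_C2)).
rewrite !div_fun_scale // grad_mul // grad_scale // grad_expR_scale.
rewrite !(dotvDl, dotvZl) (dotv_Agrad_sym alpha beta).
(* Generalizing the atoms keeps [ring] from trying to unfold them. *)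
rewrite /E; move: (expR _) (alpha x) (div _ x) (div (Agrad A beta) x)
  (dotv _ (Agrad A alpha x)) (dotv _ (Agrad A beta x)) => e a Da Db Sba Sbb.
ring.
Qed.

Lemma div_flux x :
  div (flux alpha beta) x =
  alpha x ^+ 2 * (div (Agrad A beta) x + div q x / 2)
  + 2 * alpha x * (dotv (grad beta x) (Agrad A alpha x) + dotv (q x) (grad alpha x) / 2).
Proof.
have Da2 : pderivable (fun y => alpha y ^+ 2).
  exact: C1_pderivable (C2_C1 (C2M alpha_C2 alpha_C2)).
have Dq2 : pderivable_field (fun y => 2^-1 *: q y).
  exact: pderivable_fieldZ (C1_pderivable (C2_C1 (C2_cst _))) q_pderivable.
rewrite /flux div_fun_scale //; last exact: pderivable_fieldD.
rewrite divD // div_scale // (grad_mul alpha alpha x alpha_pderivable alpha_pderivable).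
rewrite !(dotvDl, dotvDr, dotvZl, dotvZr) (dotv_Agrad_sym alpha beta) (dotvC (grad alpha x)).
move: (alpha x) (div (Agrad A beta) x) (div q x) (dotv _ (Agrad A alpha x)) (dotv (q x) _)
  => a Db Dq Sba Tqa.
ring.
Qed.

Lemma signed_op_gauge (c : R) x : c = 1 \/ c = -1 ->
  alpha x * signed_op c (fun y => alpha y * expR (c * beta y)) x =
  expR (c * beta x) * (alpha x * gauge_op alpha beta x - c * div (flux alpha beta) x).
Proof.
move=> c_sign; rewrite /signed_op /gauge_op div_Agrad_gauge grad_gauge div_flux.
rewrite dotvZr dotvDr dotvZr.
move: (expR _) (alpha x) (mu x) (div q x) (div (Agrad A alpha) x) (div (Agrad A beta) x)
  (dotv _ (Agrad A alpha x)) (dotv _ (Agrad A beta x)) (dotv (q x) (grad alpha x))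
  (dotv (q x) (grad beta x)) => e a m Dq Da Db Sba Sbb Tqa Tqb.
by case: c_sign => ->; field.
Qed.

Lemma signed_eigen_gauge (c k : R) phi x : c = 1 \/ c = -1 -> 0 < alpha x ->
  (forall y, phi y = alpha y * expR (c * beta y)) ->
  signed_op c phi x = k * phi x <->
  alpha x * (gauge_op alpha beta x - k * alpha x) = c * div (flux alpha beta) x.
Proof.
move=> c_sign alpha_gt0 phiE; rewrite (funext phiE).
have := signed_op_gauge c x c_sign.
set S := signed_op _ _ _; set G := gauge_op _ _ _; set F := div _ _.
set a := alpha x; set e := expR _ => gauge.
have e_neq0 : e != 0 by rewrite gt_eqF ?expR_gt0.
split=> [eigen|eqG].
  have : e * (a * (G - k * a) - c * F) = 0.
    by rewrite -(subrr (a * S)) {1}gauge eigen; ring.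
  by move/eqP; rewrite mulf_eq0 (negbTE e_neq0) subr_eq0 => /eqP.
have a_neq0 : a != 0 by exact: lt0r_neq0.
by apply: (mulfI a_neq0); rewrite gauge -eqG; ring.
Qed.

End Gauge.

Lemma gauge_of_eigenpair (k : R) phi phit :
  C2 phi -> C2 phit -> (forall x, 0 < phi x) -> (forall x, 0 < phit x) ->
  (forall x, signed_op 1 phi x = k * phi x) ->
  (forall x, signed_op (-1) phit x = k * phit x) ->
  let alpha := fun x => Num.sqrt (phi x * phit x) in
  let beta := fun x => 2^-1 * ln (phi x / phit x) in
  [/\ C2 alpha, C2 beta, forall x, gauge_op alpha beta x = k * alpha x
    & forall x, div (flux alpha beta) x = 0].
Proof.
move=> phi_C2 phit_C2 phi_gt0 phit_gt0 phi_eigen phit_eigen alpha beta.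
have alpha_gt0 x : 0 < alpha x by rewrite sqrtr_gt0 mulr_gt0.
have alpha_C2 : C2 alpha.
  have -> : alpha = fun x => expR (2^-1 * (ln (phi x) + ln (phit x))).
    by apply: funext => x; exact: sqrtM_expR_ln.
  exact: C2_expR (C2_scale _ (C2D (C2_ln phi_gt0 phi_C2) (C2_ln phit_gt0 phit_C2))).
have beta_C2 : C2 beta.
  have -> : beta = fun x => 2^-1 * (ln (phi x) - ln (phit x)).
    by apply: funext => x; rewrite /beta ln_div ?posrE.
  exact: C2_scale _ (C2D (C2_ln phi_gt0 phi_C2) (C2N (C2_ln phit_gt0 phit_C2))).
have phiE y : phi y = alpha y * expR (1 * beta y).
  by rewrite mul1r sqrtM_expR_half_ln_div.
have phitE y : phit y = alpha y * expR (-1 * beta y).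
  by rewrite mulN1r sqrtM_expR_Nhalf_ln_div.
suff gauge_eigen x : gauge_op alpha beta x = k * alpha x /\ div (flux alpha beta) x = 0.
  by split=> // x; have [] := gauge_eigen x.
have gauge_iff := signed_eigen_gauge _ _ alpha_C2 beta_C2.
have eqF := (gauge_iff 1 k phi x (or_introl erefl) (alpha_gt0 x) phiE).1 (phi_eigen x).
have eqNF := (gauge_iff (-1) k phit x (or_intror erefl) (alpha_gt0 x) phitE).1 (phit_eigen x).
move: eqF eqNF; move: (gauge_op _ _ _) (div _ x) => G F eqF eqNF.
have F0 : F = 0 by lra.
split=> //; move: eqF; rewrite F0 mulr0 => /eqP.
by rewrite mulf_eq0 gt_eqF // subr_eq0 => /eqP.
Qed.

Lemma eigenpair_of_gauge (k : R) alpha beta :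
  C2 alpha -> C2 beta -> (forall x, 0 < alpha x) ->
  (forall x, gauge_op alpha beta x = k * alpha x) ->
  (forall x, div (flux alpha beta) x = 0) ->
  forall c phi x, c = 1 \/ c = -1 -> (forall y, phi y = alpha y * expR (c * beta y)) ->
  signed_op c phi x = k * phi x.
Proof.
move=> alpha_C2 beta_C2 alpha_gt0 alpha_eigen flux0 c phi x c_sign phiE.
apply/(signed_eigen_gauge _ _ alpha_C2 beta_C2 c k phi x c_sign (alpha_gt0 x) phiE).
by rewrite alpha_eigen flux0 subrr !mulr0.
Qed.

End GaugeTransform.

Theorem proposition2p6 (R : realType) (N : nat)
  (eps : 'I_N -> 'rV[R]_N) (L : 'I_N -> R)
  (A : 'rV[R]_N -> 'M[R]_N) (q : 'rV[R]_N -> 'rV[R]_N) (mu : 'rV[R]_N -> R) :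
  orthonormal_fam eps ->
  (forall i, 0 < L i) ->
  (* A : cell_periodic, symmetric, C^1, uniformly elliptic *)
  cell_periodic eps L A ->
  (forall x, (A x)^T = A x) ->
  (forall i j : 'I_N, C1 (fun x => A x i j)) ->
  (exists gamma Gamma : R, [/\ 0 < gamma, gamma <= Gamma &
     forall x xi, gamma * dotv xi xi <= dotv xi (matv (A x) xi) <= Gamma * dotv xi xi]) ->
  (* q : cell_periodic, C^1 *)
  cell_periodic eps L q ->
  (forall i : 'I_N, C1 (fun x => q x 0 i)) ->
  (* mu : cell_periodic, continuous *)
  cell_periodic eps L mu ->
  continuous mu ->
  let k := k0 eps L A q mu in
  (* (i) *)
  (forall phi phit : 'rV[R]_N -> R,
     C2 phi -> C2 phit ->
     (forall x, 0 < phi x) -> (forall x, 0 < phit x) ->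
     cell_periodic eps L phi -> cell_periodic eps L phit ->
     (forall x, - div (Agrad A phi) x - dotv (q x) (grad phi x) - mu x * phi x
                = k * phi x) ->
     (forall x, - div (Agrad A phit) x + dotv (q x) (grad phit x)
                - (mu x - div q x) * phit x = k * phit x) ->
     cell_integral eps L (fun x => phi x * phit x) = 1 ->
     let alpha := fun x => Num.sqrt (phi x * phit x) in
     let beta := fun x => 2^-1 * ln (phi x / phit x) in
     [/\ C2 alpha /\ C2 beta,
       (forall x, - div (Agrad A alpha) x
          - (mu x - div q x / 2 + dotv (grad beta x) (Agrad A beta x)
             + dotv (q x) (grad beta x)) * alpha x = k * alpha x),
       (forall x, - div (fun y => (alpha y ^+ 2) *: (Agrad A beta y + 2^-1 *: q y)) x = 0),
       (forall x, 0 < alpha x) &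
       cell_periodic eps L alpha /\ cell_periodic eps L beta]) /\
  (* (ii) *)
  (forall alpha beta : 'rV[R]_N -> R,
     C2 alpha -> C2 beta ->
     (forall x, 0 < alpha x) -> cell_periodic eps L alpha -> cell_periodic eps L beta ->
     (forall x, - div (Agrad A alpha) x
          - (mu x - div q x / 2 + dotv (grad beta x) (Agrad A beta x)
             + dotv (q x) (grad beta x)) * alpha x = k * alpha x) ->
     (forall x, - div (fun y => (alpha y ^+ 2) *: (Agrad A beta y + 2^-1 *: q y)) x = 0) ->
     let phi := fun x => alpha x * expR (beta x) in
     let phit := fun x => alpha x * expR (- beta x) in
     [/\ C2 phi /\ C2 phit,
       (forall x, 0 < phi x) /\ (forall x, 0 < phit x),
       cell_periodic eps L phi /\ cell_periodic eps L phit,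
       (forall x, - div (Agrad A phi) x - dotv (q x) (grad phi x) - mu x * phi x
                = k * phi x) &
       (forall x, - div (Agrad A phit) x + dotv (q x) (grad phit x)
                - (mu x - div q x) * phit x = k * phit x)]).
Proof.
move=> _ _ _ A_sym A_C1 _ _ q_C1 _ _ k.
have A_pderivable i j := C1_pderivable (A_C1 i j).
have q_pderivable i := C1_pderivable (q_C1 i).
split.
- move=> phi phit phi_C2 phit_C2 phi_gt0 phit_gt0 phi_per phit_per phi_eigen phit_eigen _.
  move=> alpha beta.
  have [] := gauge_of_eigenpair A q mu A_sym A_pderivable q_pderivable k phi phit
    phi_C2 phit_C2
    phi_gt0 phit_gt0 (fun x => etrans (signed_op1 A q mu phi x) (phi_eigen x))
    (fun x => etrans (signed_opN1 A q mu phit x) (phit_eigen x)).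
  move=> alpha_C2 beta_C2 alpha_eigen flux0.
  split=> [|x|x|x|].
  + exact: conj alpha_C2 beta_C2.
  + exact: alpha_eigen.
  + by rewrite flux0 oppr0.
  + by rewrite sqrtr_gt0 mulr_gt0.
  + by split=> x i; rewrite /alpha /beta phi_per phit_per.
- move=> alpha beta alpha_C2 beta_C2 alpha_gt0 alpha_per beta_per alpha_eigen flux0 phi phit.
  have flux_eq0 x : div (flux A q alpha beta) x = 0 by rewrite -[LHS]opprK flux0 oppr0.
  have eigen := eigenpair_of_gauge A q mu A_sym A_pderivable q_pderivable k alpha beta
    alpha_C2 beta_C2
    alpha_gt0 alpha_eigen flux_eq0.
  split.
  + exact: conj (C2M alpha_C2 (C2_expR beta_C2)) (C2M alpha_C2 (C2_expR (C2N beta_C2))).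
  + by split=> x; rewrite mulr_gt0 ?expR_gt0.
  + by split=> x i; rewrite /phi /phit alpha_per beta_per.
  + move=> x; rewrite -[LHS]/(Lop A q mu phi x) -signed_op1.
    by apply: eigen => [|y]; [left | rewrite mul1r].
  + move=> x; rewrite -signed_opN1.
    by apply: eigen => [|y]; [right | rewrite mulN1r].
Qed.
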